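(* Let $B$ be an nbc basis of $M$ with $|\mathrm{IA}(B)|=k+1$. Write $B-\mathrm{IA}(B)=\{e_1>\cdots>e_{r-k}\}$ and $(E-B)-\min(E-B)=\{e_{r-k+1}<\cdots<e_{n-k-1}\}$, and let $\mathcal F(B)|\mathcal G(B)$ be the nbc biflag of $B$. Then $(\mathcal F(B)|\mathcal G(B),(e_1,\dots,e_{n-k-1}))\in\mathcal T^{n-k-1}$; equivalently, for every $e\in (B-\mathrm{IA}(B))\cup((E-B)-\min(E-B))$, \[ e=\max\Big(E-\mathrm{cl}\big((B-\mathrm{IA}(B))_{>e}\big)-\mathrm{cl}^\perp\big((E-B)_{>e}\big)\Big), \] where $X_{>e}=\{x\in X:x>e\}$.
   Context: Let $M$ be a matroid with no loops and no coloops on the ground set $E=\{0,1,\dots,n\}$, totally ordered by the usual order of integers, of rank $r+1$; its dual $M^\perp$ has rank $n-r$. Write $\mathrm{cl}$, $\mathrm{cl}^\perp$ for the closure operators of $M$, $M^\perp$. A biflat of $M$ is a pair $F|G$ where $F$ is a flat of $M$, $G$ is a flat of $M^\perp$, both are nonempty, they are not both equal to $E$, and $F\cup G=E$. Two biflats $F|G$, $F'|G'$ are compatible if ($F\subseteq F'$ and $G\supseteq G'$) or ($F\supseteq F'$ and $G\subseteq G'$). A biflag is a set of pairwise compatible biflats with $\bigcup_{F|G}(F\cap G)\neq E$; its length is its number of biflats. For a basis $B$ and $i\in B$, $C^\perp(B,i)$ is the unique cocircuit of $M$ contained in $(E-B)\cup i$ and containing $i$; for $i\notin B$, $C(B,i)$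 is the unique circuit contained in $B\cup i$ and containing $i$. $\mathrm{IA}(B)=\{i\in B: i=\min C^\perp(B,i)\}$, $\mathrm{EA}(B)=\{i\notin B: i=\min C(B,i)\}$. $B$ is an nbc basis if $\mathrm{EA}(B)=\emptyset$. nbc biflag: with $e_1,\dots,e_{n-k-1}$ as in the claim, $\mathcal F(B)|\mathcal G(B)$ is the biflag with biflats $F_j|G_j=\mathrm{cl}\{e_1,\dots,e_j\}|E$ for $1\le j\le r-k$ and $F_j|G_j=E|\mathrm{cl}^\perp\{e_j,\dots,e_{n-k-1}\}$ for $r-k+1\le j\le n-k-1$. $\mathcal T^m$: the set of pairs $(\mathcal F|\mathcal G,\mathbf e)$ with $\mathcal F|\mathcal G$ a biflag of length $m$ with biflats indexed $F_1|G_1,\dots,F_m|G_m$, $F_1\subseteq\cdots\subseteq F_m$, $G_1\supseteq\cdots\supseteq G_m$, and $\mathbf e=(e_1,\dots,e_m)$ distinct elements of $E$ with $e_i\in F_i\cap G_i$ and $e_i=\max\big(E-\bigcup_{j:\,e_j>e_i}(F_j\cap G_j)\big)$ for all $i$. *)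

From mathcomp Require Import all_boot.
Set Implicit Arguments. Unset Strict Implicit. Unset Printing Implicit Defensive.

Section Matroid.
Variable T : finType.
Implicit Types (bases : {set {set T}}) (X Y C F G : {set T}).

Definition is_matroid bases :=
  bases != set0 /\
  forall B1 B2, B1 \in bases -> B2 \in bases ->
    forall x, x \in B1 :\: B2 ->
      exists2 y, y \in B2 :\: B1 & (y |: (B1 :\ x)) \in bases.

Definition indep bases X := [exists B in bases, X \subset B].
Definition rank bases X := \max_(B in bases) #|X :&: B|.
Definition cl bases X := [set x | rank bases (x |: X) == rank bases X].
Definition flat bases X := cl bases X == X.

Definition dual bases : {set {set T}} := [set ~: B | B in bases].
Definition clp bases X := cl (dual bases) X.

Definition circuit bases C :=
  ~~ indep bases C && [forall D : {set T}, (D \proper C) ==> indep bases D].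
Definition cocircuit bases C := circuit (dual bases) C.

Definition loopless bases := forall x : T, exists2 B, B \in bases & x \in B.
Definition coloopless bases := forall x : T, exists2 B, B \in bases & x \notin B.

Definition biflat bases F G :=
  [/\ flat bases F, flat (dual bases) G, (F != set0) && (G != set0),
      ~~ ((F == setT) && (G == setT)) & F :|: G = setT].

Definition compatible F G F' G' :=
  (F \subset F') && (G' \subset G) || (F' \subset F) && (G \subset G').

End Matroid.

Section Ordered.
Variable n : nat.
Local Notation E := 'I_n.+1.
Implicit Types (bases : {set {set E}}) (B X S : {set E}).

Definition is_max S (x : E) := x \in S /\ forall y, y \in S -> y <= x.
Definition is_min S (x : E) := x \in S /\ forall y, y \in S -> x <= y.

(* IA(B): i in B with i = min C^perp(B,i), C^perp(B,i) the (unique) cocircuit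
   contained in (E - B) u {i} and containing i *)
Definition IA bases B := [set i in B |
  [forall C : {set E}, (cocircuit bases C && (C \subset ~: B :|: [set i])
                        && (i \in C)) ==> [forall x in C, i <= x]]].
(* EA(B): i notin B with i = min C(B,i) *)
Definition EA bases B := [set i in ~: B |
  [forall C : {set E}, (circuit bases C && (C \subset B :|: [set i])
                        && (i \in C)) ==> [forall x in C, i <= x]]].
Definition nbc bases B := (B \in bases) && (EA bases B == set0).

Definition gt_part X (e : E) := [set x in X | e < x].

(* biflag of length m, indexed 0..m-1 (paper's F_1..F_m) *)
Definition biflag bases m (F G : nat -> {set E}) :=
  [/\ forall j, j < m -> biflat bases (F j) (G j),
      forall i j, i < m -> j < m -> compatible (F i) (G i) (F j) (G j),
      (* the m biflats are distinct, so the biflag has length m *)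
      forall i j, i < m -> j < m -> (F i, G i) = (F j, G j) -> i = j &
      \bigcup_(j < m) (F j :&: G j) != setT].

Definition in_T bases m (F G : nat -> {set E}) (e : nat -> E) :=
  [/\ biflag bases m F G,
      forall i j, i <= j < m -> F i \subset F j /\ G j \subset G i,
      forall i j, i < m -> j < m -> e i = e j -> i = j,
      forall i, i < m -> e i \in F i :&: G i &
      forall i, i < m ->
        is_max (~: \bigcup_(j < m | e i < e j) (F j :&: G j)) (e i)].

Definition coB_nomin B := [set x in ~: B | [exists y in ~: B, y < x]].

(* e_1 > ... > e_{r-k} (elements of B - IA(B)) followed by
   e_{r-k+1} < ... < e_{n-k-1} (elements of (E-B) - min(E-B)) *)
Definition nbc_seq bases B : seq E :=
  sort (fun x y : E => y < x) (enum (B :\: IA bases B)) ++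
  sort (fun x y : E => x < y) (enum (coB_nomin B)).

Definition nbc_e bases B (j : nat) : E := nth ord0 (nbc_seq bases B) j.

(* nbc biflag: for 0-based j (paper index j+1), with r-k = #|B - IA(B)| *)
Definition nbc_F bases B (j : nat) : {set E} :=
  if j < #|B :\: IA bases B|
  then cl bases [set x in take j.+1 (nbc_seq bases B)] else setT.
Definition nbc_G bases B (j : nat) : {set E} :=
  if j < #|B :\: IA bases B| then setT
  else clp bases [set x in drop j (nbc_seq bases B)].

End Ordered.

From mathcomp Require Import all_boot zify.
Set Implicit Arguments. Unset Strict Implicit. Unset Printing Implicit Defensive.

(* Write A = B - IA(B) and D = (E - B) - min(E - B), and for e in E let
     U(e) = cl(A_{>e}) u cl^perp((E - B)_{>e})          (upper_closure e).
   The heart of the proof is the second claim of the theorem, that e is the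
   largest element outside U(e) for e in A u D.  Every y > e lies in U(e): if y
   is outside B or in A this is immediate, and if y is internally active its
   fundamental cocircuit has y as least element, so y is cospanned by the
   elements of E - B above e.  Conversely e is not in U(e): since B is nbc,
   the fundamental circuit of e has an element below e (and dually for e in
   A, which is not internally active), so e is spanned by nothing above it.

   The first claim is reduced to the second: along the sequence
   e_1 > ... > e_{r-k} < ... < e_{n-k-1} the sets {e_1..e_j} and
   {e_j..e_{n-k-1}} are exactly the elements of A, resp. D, above e_j, so the
   union of the biflats F_j n G_j with e_j > e is U(e) (using that M has no
   loops and no coloops for the empty segments).  The remaining conditions
   (flats, monotonicity, distinctness, non-covering by min(E - B)) are rank
   computations. *)


Section MatroidTheory.
Variables (T : finType) (bs : {set {set T}}) (s : nat).
Hypothesis HM : is_matroid bs.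
Hypothesis Hsz : forall B, B \in bs -> #|B| = s.
Implicit Types (X Y I J C D B P : {set T}).

Lemma indepP X : reflect (exists2 B, B \in bs & X \subset B) (indep bs X).
Proof.
apply: (iffP existsP) => [[B /andP[]]|[B]]; first by eauto.
by move=> ? ?; exists B; apply/andP.
Qed.

Lemma indep_sub X Y : X \subset Y -> indep bs Y -> indep bs X.
Proof.
move=> sXY /indepP[B HB sYB]; apply/indepP; exists B => //.
exact: subset_trans sXY sYB.
Qed.

Lemma basis_indep B : B \in bs -> indep bs B.
Proof. by move=> HB; apply/indepP; exists B. Qed.

Lemma indep_card X : indep bs X -> #|X| <= s.
Proof. by case/indepP=> B HB sXB; rewrite -(Hsz HB); exact: subset_leq_card. Qed.

Lemma basis_exists : exists B, B \in bs.
Proof. by case: HM => /set0Pn[B HB] _; exists B. Qed.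

Lemma rank_ge X I : I \subset X -> indep bs I -> #|I| <= rank bs X.
Proof.
move=> sIX /indepP[B HB sIB]; apply: leq_trans (leq_bigmax_cond _ HB).
by apply: subset_leq_card; rewrite subsetI sIX.
Qed.

Lemma rank_le X m : (forall B, B \in bs -> #|X :&: B| <= m) -> rank bs X <= m.
Proof. by move=> H; apply/bigmax_leqP. Qed.

Lemma rank_indep I : indep bs I -> rank bs I = #|I|.
Proof.
move=> HI; apply/eqP; rewrite eqn_leq rank_ge // andbT.
by apply: rank_le => B _; apply: subset_leq_card; apply: subsetIl.
Qed.

Lemma rank_setT : rank bs setT = s.
Proof.
case: basis_exists => B0 HB0; apply/anti_leq/andP; split.
  by apply: rank_le => B HB; rewrite setTI (Hsz HB).
by rewrite -(Hsz HB0); apply: rank_ge (subsetT _) (basis_indep HB0).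
Qed.

Lemma cl_indep I x : indep bs I ->
  (x \in cl bs I) = (x \in I) || ~~ indep bs (x |: I).
Proof.
move=> HI; rewrite inE (rank_indep HI).
case: (boolP (x \in I)) => xI /=.
  by rewrite (setUidPr _) ?sub1set // rank_indep // eqxx.
case: (boolP (indep bs (x |: I))) => Hx /=.
  by rewrite rank_indep // cardsU1 xI; apply/negP => /eqP; lia.
apply/eqP/anti_leq/andP; split; last by apply: rank_ge => //; apply: subsetUr.
apply: rank_le => B HB.
suff : #|(x |: I) :&: B| < #|x |: I| by rewrite cardsU1 xI.
apply: proper_card; rewrite properE subsetIl /=; apply: contra Hx => H.
by apply/indepP; exists B => //; apply: subset_trans H (subsetIr _ _).
Qed.

Lemma cl_sub I : indep bs I -> I \subset cl bs I.
Proof. by move=> HI; apply/subsetP => x xI; rewrite cl_indep // xI. Qed.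

Lemma cl_mono I J : I \subset J -> indep bs J -> cl bs I \subset cl bs J.
Proof.
move=> sIJ HJ; have HI := indep_sub sIJ HJ.
apply/subsetP => x; rewrite !cl_indep //; case/orP => [xI|nd].
  by rewrite (subsetP sIJ x xI).
by apply/orP; right; apply: contra nd; apply: indep_sub; apply: setUS.
Qed.

Lemma basis_exchange_towards I B0 B2 x : B0 \in bs -> B2 \in bs ->
  I \subset B2 -> x \in B2 -> x \notin I :|: B0 ->
  exists2 B3, B3 \in bs &
    (I \subset B3) && (#|B3 :\: (I :|: B0)| < #|B2 :\: (I :|: B0)|).
Proof.
move=> HB0 HB2 sIB2 xB2 xIB0.
have xB20 : x \in B2 :\: B0.
  by rewrite inE xB2 andbT; apply: contra xIB0 => H; rewrite inE H orbT.
case: HM => _ /(_ B2 B0 HB2 HB0 x xB20) [y]; rewrite inE => /andP[yB2 yB0] HB3.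
exists (y |: (B2 :\ x)) => //; apply/andP; split.
  apply/subsetP => z zI; rewrite !inE (subsetP sIB2 z zI) andbT.
  by apply/orP; right; apply: contraNneq xIB0 => <-; rewrite inE zI.
apply: proper_card; rewrite properE; apply/andP; split.
  apply/subsetP => z; rewrite !inE.
  case/andP => H1 /orP[/eqP Ezy|/andP[_ ->]]; last by rewrite H1.
  by rewrite Ezy yB0 orbT in H1.
apply/subsetPn; exists x; first by rewrite inE xIB0.
by rewrite !inE eqxx /= orbF negb_and negbK; apply/orP; right; apply: contraNneq yB2 => <-.
Qed.

Lemma basis_extension I B0 : indep bs I -> B0 \in bs ->
  exists2 B', B' \in bs & (I \subset B') && (B' \subset I :|: B0).
Proof.
move=> /indepP[B1 HB1 sIB1] HB0.
move: {2}#|B1 :\: (I :|: B0)| (leqnn #|B1 :\: (I :|: B0)|) => m.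
elim: m B1 HB1 sIB1 => [|m IH] B1 HB1 sIB1 Hm.
  by move: Hm; rewrite leqn0 cards_eq0 setD_eq0 => sB1; exists B1 => //; apply/andP.
case: (boolP (B1 \subset I :|: B0)) => sB1.
  by exists B1 => //; apply/andP.
case/subsetPn: sB1 => x xB1 xn.
case: (basis_exchange_towards HB0 HB1 sIB1 xB1 xn) => B3 HB3 /andP[sIB3 lt].
by apply: (IH B3) => //; rewrite -ltnS (leq_trans lt).
Qed.

Lemma augmentation I J : indep bs I -> indep bs J -> #|I| < #|J| ->
  exists2 x, x \in J :\: I & indep bs (x |: I).
Proof.
move=> HI /indepP[B2 HB2 sJB2] ltIJ.
case: (basis_extension HI HB2) => B' HB' /andP[sIB' sB'].
case: (boolP [exists x in J :\: I, x \in B']).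
  case/exists_inP => x xJI xB'; exists x => //.
  by apply/indepP; exists B' => //; rewrite subUset sub1set xB' sIB'.
move/exists_inPn => H.
have sub : B' \subset I :|: (B2 :\: J).
  apply/subsetP => z zB'; move: (subsetP sB' z zB'); rewrite !inE.
  case/orP => [->//|zB2]; rewrite zB2 andbT orbC.
  case: (boolP (z \in I)) => zI; rewrite ?orbT ?orbF //.
  by apply: contraTN zB' => zJ; apply: H; rewrite inE zI zJ.
have := leq_trans (subset_leq_card sub) (leq_card_setU I (B2 :\: J)).
rewrite (Hsz HB') cardsD (setIidPr sJB2) (Hsz HB2).
have := subset_leq_card sJB2; rewrite (Hsz HB2); lia.
Qed.

Lemma rank_cl I : indep bs I -> rank bs (cl bs I) = #|I|.
Proof.
move=> HI; apply/anti_leq/andP; split; last exact: rank_ge (cl_sub HI) HI.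
apply: rank_le => B HB; rewrite leqNgt; apply/negP => lt.
have HJ : indep bs (cl bs I :&: B) by apply: indep_sub (subsetIr _ _) (basis_indep HB).
case: (augmentation HI HJ lt) => x; rewrite in_setD in_setI => /and3P[xI xcl _] Hx.
by move: xcl; rewrite cl_indep // (negbTE xI) Hx.
Qed.

Lemma cl_idem I : indep bs I -> cl bs (cl bs I) = cl bs I.
Proof.
move=> HI; apply/setP => x; rewrite [x \in cl bs (cl bs I)]inE rank_cl //.
case: (boolP (x \in cl bs I)) => Hx.
  by rewrite (setUidPr _) ?sub1set // rank_cl // eqxx.
move: (Hx); rewrite cl_indep // negb_or negbK => /andP[xI Hi].
apply/negbTE/negP => /eqP E.
have := rank_ge (setUS [set x] (cl_sub HI)) Hi; rewrite E cardsU1 xI; lia.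
Qed.

Lemma cl_setT : cl bs setT = setT.
Proof. by apply/setP => x; rewrite !inE setUT eqxx. Qed.

Lemma cl_neqT I : indep bs I -> #|I| < s -> cl bs I != setT.
Proof.
move=> HI lt; apply/negP => /eqP E.
by move: (rank_cl HI); rewrite E rank_setT => E'; rewrite E' ltnn in lt.
Qed.

Lemma cl_set0 : loopless bs -> cl bs set0 = set0.
Proof.
move=> Hloop; apply/setP => x; rewrite cl_indep ?inE; last first.
  by case: basis_exists => B0 HB0; apply: indep_sub (sub0set B0) (basis_indep HB0).
case: (Hloop x) => B0 HB0 xB0; apply/negbTE; rewrite negbK setU0.
by apply/indepP; exists B0; rewrite ?sub1set.
Qed.

Lemma circuit_dep C : circuit bs C -> ~~ indep bs C.
Proof. by case/andP. Qed.

Lemma circuit_proper C D : circuit bs C -> D \proper C -> indep bs D.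
Proof. by case/andP => _ /forallP /(_ D) /implyP; apply. Qed.

Lemma dep_circuit X : ~~ indep bs X -> exists2 C, circuit bs C & C \subset X.
Proof.
elim: {X}_.+1 {-2}X (ltnSn #|X|) => // m IH X HX nX.
case: (boolP [forall D : {set T}, (D \proper X) ==> indep bs D]) => H.
  by exists X => //; apply/andP.
case/forallPn: H => D; rewrite negb_imply => /andP[pD nD].
case: (IH D _ nD) => [|C HC sC]; first by have := proper_card pD; lia.
by exists C => //; apply: subset_trans sC (proper_sub pD).
Qed.

Lemma circuit_through I x : indep bs I -> ~~ indep bs (x |: I) ->
  exists2 C, circuit bs C & (C \subset x |: I) && (x \in C).
Proof.
move=> HI /dep_circuit[C HC sC]; exists C => //; rewrite sC /=.
apply: contraNT (circuit_dep HC) => xC; apply: indep_sub HI.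
apply/subsetP => z zC; move: (subsetP sC z zC).
by case/setU1P => // E; rewrite -E zC in xC.
Qed.

Lemma circuit_mem_added B x C : B \in bs -> circuit bs C ->
  C \subset x |: B -> x \in C.
Proof.
move=> HB HC sC; apply: contraNT (circuit_dep HC) => xC.
apply/indepP; exists B => //; apply/subsetP => z zC; move: (subsetP sC z zC).
by case/setU1P => // E; rewrite -E zC in xC.
Qed.

Lemma fundamental_exchange B x C b : B \in bs -> x \notin B -> circuit bs C ->
  C \subset x |: B -> b \in C -> b != x -> x |: (B :\ b) \in bs.
Proof.
move=> HB xB HC sC bC bx.
have HI : indep bs (C :\ b) by apply: circuit_proper HC (properD1 bC).
case: (basis_extension HI HB) => B' HB' /andP[sIB' sB'].
have bB : b \in B by move: (subsetP sC b bC); case/setU1P => // E; rewrite E eqxx in bx.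
have xC := circuit_mem_added HB HC sC.
have nbB' : b \notin B'.
  apply: contraNN (circuit_dep HC) => bB'; apply/indepP; exists B' => //.
  apply/subsetP => z zC; case: (eqVneq z b) => [->//|zb].
  by apply: (subsetP sIB'); rewrite in_setD1 zb zC.
have sub : B' \subset x |: (B :\ b).
  apply/subsetP => z zB'; have zb : z != b by apply: contraNneq nbB' => <-.
  move: (subsetP sB' z zB'); rewrite in_setU in_setD1 => /orP[/andP[_ zC]|zB].
    by move: (subsetP sC z zC); case/setU1P => [->|zB]; rewrite !inE ?eqxx // zb zB orbT.
  by rewrite !inE zb zB orbT.
suff <- : B' = x |: (B :\ b) by [].
apply/eqP; rewrite eqEcard sub (Hsz HB') cardsU1 !inE negb_and xB orbT /=.
by move: (cardsD1 b B); rewrite bB (Hsz HB) => ->.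
Qed.

Lemma fundamental_circuit_sub B x C C' : B \in bs -> x \notin B -> circuit bs C ->
  C \subset x |: B -> circuit bs C' -> C' \subset x |: B -> C \subset C'.
Proof.
move=> HB xB HC sC HC' sC'; apply/subsetP => z zC.
case: (eqVneq z x) => [->|zx]; first exact: circuit_mem_added HB HC' sC'.
have HB2 := fundamental_exchange HB xB HC sC zC zx.
apply: contraNT (circuit_dep HC') => zC'; apply/indepP; exists (x |: (B :\ z)) => //.
apply/subsetP => w wC; move: (subsetP sC' w wC); rewrite !inE.
by case/orP => [->//|->]; rewrite andbT orbC; apply/orP; left; apply: contraNneq zC' => <-.
Qed.

Lemma fundamental_circuit_cl B e P C : B \in bs -> P \subset B -> e \notin B ->
  e \in cl bs P -> circuit bs C -> C \subset e |: B -> C \subset e |: P.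
Proof.
move=> HB sPB eB ecl HC sC.
have HP : indep bs P := indep_sub sPB (basis_indep HB).
have eP : e \notin P by apply: contra eB; apply: (subsetP sPB).
move: ecl; rewrite cl_indep // (negbTE eP) /= => /(circuit_through HP)[C' HC' /andP[sC' _]].
have sC'B : C' \subset e |: B := subset_trans sC' (setUS _ sPB).
exact: subset_trans (fundamental_circuit_sub HB eB HC sC HC' sC'B) sC'.
Qed.

Lemma notin_cl_basis B P e : B \in bs -> P \subset B -> e \notin P ->
  (e \notin B -> exists2 C, circuit bs C & (C \subset e |: B) && ~~ (C \subset e |: P)) ->
  e \notin cl bs P.
Proof.
move=> HB sPB eP Hfund; have HP : indep bs P := indep_sub sPB (basis_indep HB).
case: (boolP (e \in B)) => eB.
  rewrite cl_indep // negb_or eP negbK; apply/indepP; exists B => //.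
  by rewrite subUset sub1set eB.
case: (Hfund eB) => C HC /andP[sC nsC]; apply: contra nsC => ecl.
exact: fundamental_circuit_cl HB sPB eB ecl HC sC.
Qed.

Lemma dual_matroid : is_matroid (dual bs) /\
  forall B, B \in dual bs -> #|B| = #|T| - s.
Proof.
split; last by move=> B /imsetP[B0 HB0 ->]; rewrite cardsCs setCK (Hsz HB0).
split.
  by case: basis_exists => B0 HB0; apply/set0Pn; exists (~: B0); apply: imset_f.
move=> B1' B2' /imsetP[B1 HB1 ->] /imsetP[B2 HB2 ->] x.
rewrite !inE negbK => /andP[xB2 xB1].
have nI : ~~ indep bs (x |: B1).
  by apply/negP => /indep_card; rewrite cardsU1 xB1 (Hsz HB1); lia.
case: (circuit_through (basis_indep HB1) nI) => C HC /andP[sC xC].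
have : ~~ (C \subset B2).
  by apply: contraNN (circuit_dep HC) => sCB2; apply: indep_sub sCB2 (basis_indep HB2).
case/subsetPn => y yC yB2.
have yx : y != x by apply: contraNneq yB2 => ->.
have yB1 : y \in B1 by move: (subsetP sC y yC); case/setU1P => // E; rewrite E eqxx in yx.
exists y; first by rewrite !inE negbK yB1 yB2.
have -> : y |: (~: B1 :\ x) = ~: (x |: (B1 :\ y)).
  apply/setP => z; rewrite !inE.
  by case: (eqVneq z y) => [->|zy] /=; [rewrite (negbTE yx) | case: (eqVneq z x)].
exact/imset_f/(fundamental_exchange HB1 xB1 HC sC yC yx).
Qed.

End MatroidTheory.

Lemma cl_circuit (T : finType) (bs : {set {set T}}) (I C : {set T}) x :
  indep bs I -> circuit bs C -> C :\ x \subset I -> x \in cl bs I.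
Proof.
move=> HI HC sC; rewrite cl_indep //; apply/orP; right.
apply: contra (circuit_dep HC) => Hi; apply: indep_sub Hi.
apply/subsetP => z zC; case: (eqVneq z x) => [->|zx]; first exact: setU11.
by apply: setU1r; apply: (subsetP sC); rewrite in_setD1 zx zC.
Qed.

Lemma coloopless_dual (T : finType) (bs : {set {set T}}) :
  coloopless bs -> loopless (dual bs).
Proof.
by move=> Hco x; case: (Hco x) => B HB xB; exists (~: B); rewrite ?inE ?imset_f.
Qed.

(* On duplicate-free sequences, merge sort only
   ever compares distinct elements, so sorting with a relation l1 agrees with
   sorting with any l2 that coincides with l1 on distinct elements (e.g. > and
   >=); this is how the strictly monotone enumerations of the nbc sequence are
   obtained from the total orders of the library. *)
Section SortDistinct.
Variables (T : eqType) (l1 l2 : rel T).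
Hypothesis l12 : forall x y, x != y -> l1 x y = l2 x y.

Lemma merge_distinct s1 s2 : uniq (s1 ++ s2) -> merge l1 s1 s2 = merge l2 s1 s2.
Proof.
elim: s1 s2 => [|x s1 IH1] s2 //=; elim: s2 => [|y s2 IH2] //= U.
have xy : x != y by apply: contraTneq U => ->; rewrite /= mem_cat inE eqxx orbT.
rewrite l12 //; case: (l2 x y); congr cons.
  by apply: IH1; case/andP: U.
apply: IH2; have S : subseq (s1 ++ s2) (s1 ++ y :: s2).
  by apply: cat_subseq; [exact: subseq_refl | exact: subseq_cons].
case/andP: U => H1 H2; rewrite (subseq_uniq S H2) andbT; apply: contra H1.
exact: (mem_subseq S).
Qed.

Lemma perm_merge_sort_push (l : rel T) s1 ss :
  perm_eq (flatten (merge_sort_push l s1 ss)) (s1 ++ flatten ss).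
Proof.
elim: ss s1 => [|[|x s2] ss IH] s1 /=; try by rewrite perm_refl.
apply: perm_trans (IH _) _; rewrite -cat_cons catA perm_cat2r.
by rewrite perm_merge perm_catC.
Qed.

Lemma uniq_merge_runs (l : rel T) s1 s2 ss : uniq (s1 ++ s2 ++ flatten ss) ->
  uniq (s2 ++ s1) /\ uniq (merge l s2 s1 ++ flatten ss).
Proof.
have P1 : perm_eq (s1 ++ s2 ++ flatten ss) ((s2 ++ s1) ++ flatten ss).
  by rewrite catA perm_cat2r perm_catC.
rewrite (perm_uniq P1) => U; split; first by move: U; rewrite cat_uniq => /andP[].
by rewrite (perm_uniq (_ : perm_eq _ ((s2 ++ s1) ++ flatten ss))) // perm_cat2r perm_merge.
Qed.

Lemma merge_sort_push_distinct s1 ss : uniq (s1 ++ flatten ss) ->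
  merge_sort_push l1 s1 ss = merge_sort_push l2 s1 ss.
Proof.
elim: ss s1 => [|[|x s2] ss IH] s1 //= U.
have [U1 U2] := uniq_merge_runs (s2 := x :: s2) l2 U.
by rewrite merge_distinct //; congr cons; apply: IH.
Qed.

Lemma merge_sort_pop_distinct s1 ss : uniq (s1 ++ flatten ss) ->
  merge_sort_pop l1 s1 ss = merge_sort_pop l2 s1 ss.
Proof.
elim: ss s1 => [|s2 ss IH] s1 //= U.
have [U1 U2] := uniq_merge_runs l2 U.
by rewrite merge_distinct //; apply: IH.
Qed.

Lemma sort_rec1_distinct ss s : uniq (s ++ flatten ss) ->
  sort_rec1 l1 ss s = sort_rec1 l2 ss s.
Proof.
elim: s ss => [|x s IH] ss U /=; first exact: merge_sort_pop_distinct.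
have Ux : uniq ([:: x] ++ flatten ss).
  by move: U; rewrite /= mem_cat cat_uniq => /andP[/norP[_ ->] /and3P[_ _ ->]].
rewrite merge_sort_push_distinct //; apply: IH.
have P2 : perm_eq (s ++ flatten (merge_sort_push l2 [:: x] ss)) (x :: s ++ flatten ss).
  apply: perm_trans (_ : perm_eq _ (s ++ x :: flatten ss)) _.
    by rewrite perm_cat2l perm_merge_sort_push.
  by rewrite perm_sym -cat1s perm_catCA.
by rewrite (perm_uniq P2).
Qed.

Lemma sort_distinct s : uniq s -> sort l1 s = sort l2 s.
Proof. by move=> U; rewrite !sortE; apply: sort_rec1_distinct; rewrite cats0. Qed.

Lemma sort_distinct_sorted s : total l2 -> uniq s -> sorted l1 (sort l1 s).
Proof.
move=> tot U; rewrite (sort_distinct U).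
have := sort_sorted tot s; have := U; rewrite -(sort_uniq l2).
case: (sort l2 s) => //= x t; elim: t x => [|y t IH] x //= /andP[xn Ut] /andP[lxy P].
have xy : x != y by apply: contraNneq xn => ->; rewrite inE eqxx.
by rewrite l12 // lxy IH.
Qed.

End SortDistinct.

Section TakeDrop.
Variables (T : eqType) (x0 : T).

Lemma mem_take_nth s t x : x \in take t s -> exists i, [/\ i < t, i < size s & nth x0 s i = x].
Proof.
case/(nthP x0) => i Hi <-; move: Hi; rewrite size_take_min leq_min => /andP[it isz].
by exists i; rewrite nth_take.
Qed.

Lemma mem_drop_nth s t x : x \in drop t s -> exists i, [/\ t <= i, i < size s & nth x0 s i = x].
Proof.
case/(nthP x0) => i Hi <-; move: Hi; rewrite size_drop => Hi.
by exists (t + i); rewrite nth_drop; split => //; lia.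
Qed.

Lemma nth_in_take s t i : i < t -> i < size s -> nth x0 s i \in take t s.
Proof.
by move=> it isz; rewrite -(nth_take x0 it); apply: mem_nth; rewrite size_take_min leq_min it.
Qed.

Lemma nth_in_drop s t i : t <= i -> i < size s -> nth x0 s i \in drop t s.
Proof.
move=> ti isz; rewrite -(subnKC ti) -nth_drop; apply: mem_nth.
by rewrite size_drop; lia.
Qed.

End TakeDrop.

Lemma gt_part_sub n (X : {set 'I_n.+1}) e : gt_part X e \subset X.
Proof. by apply/subsetP => x; rewrite inE => /andP[]. Qed.

Lemma set_min n (X : {set 'I_n.+1}) : X != set0 ->
  exists2 m, m \in X & forall z, z \in X -> m <= z.
Proof.
case/set0Pn => x xX.
by case: (@arg_minnP _ x (fun i => i \in X) (fun i => nat_of_ord i) xX) => m; exists m.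
Qed.

Section NbcBiflag.
Variables (n r k : nat) (bases : {set {set 'I_n.+1}}).
Hypothesis HM : is_matroid bases.
Hypothesis Hloop : loopless bases.
Hypothesis Hcoloop : coloopless bases.
Hypothesis Hrank : forall B, B \in bases -> #|B| = r.+1.
Variable B : {set 'I_n.+1}.
Hypothesis HB : nbc bases B.
Hypothesis HIA : #|IA bases B| = k.+1.

Local Notation E := 'I_n.+1.
Local Notation A := (B :\: IA bases B).
Local Notation D := (coB_nomin B).
Implicit Types (P Q X C : {set E}).

Lemma B_basis : B \in bases. Proof. by case/andP: HB. Qed.

Lemma coB_basis : ~: B \in dual bases. Proof. exact: imset_f B_basis. Qed.

Lemma dual_is_matroid : is_matroid (dual bases).
Proof. exact: (dual_matroid HM Hrank).1. Qed.

Lemma dual_card X : X \in dual bases -> #|X| = n - r.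
Proof. by move=> HX; rewrite ((dual_matroid HM Hrank).2 X HX) card_ord. Qed.

Lemma nbc_fundamental_circuit (e : E) : e \notin B -> exists2 C, circuit bases C &
  [/\ C \subset e |: B, e \in C & exists2 y, y \in C & y < e].
Proof.
move=> eB; have : e \notin EA bases B by case/andP: HB => _ /eqP->; rewrite inE.
rewrite inE inE eB /= => /forallPn [C]; rewrite negb_imply.
case/andP => /andP[/andP[HC sC] eC] /forall_inPn [y yC].
by rewrite -ltnNge setUC => lt; exists C => //; split => //; exists y.
Qed.

Lemma inactive_fundamental_cocircuit (e : E) : e \in A -> exists2 C, cocircuit bases C &
  [/\ C \subset e |: ~: B, e \in C & exists2 y, y \in C & y < e].
Proof.
rewrite in_setD => /andP[nIA eB].
move: nIA; rewrite inE eB /= => /forallPn [C]; rewrite negb_imply.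
case/andP => /andP[/andP[HC sC] eC] /forall_inPn [y yC].
by rewrite -ltnNge setUC => lt; exists C => //; split => //; exists y.
Qed.

Lemma active_fundamental_cocircuit (x : E) : x \in IA bases B -> exists2 C,
  cocircuit bases C & [/\ C \subset x |: ~: B, x \in C & forall z, z \in C -> x <= z].
Proof.
rewrite inE => /andP[xB /forallP Hmin].
have nd : ~~ indep (dual bases) (x |: ~: B).
  apply/negP => /(indep_card dual_card).
  by rewrite cardsU1 inE negbK xB (dual_card coB_basis) add1n ltnn.
case: (circuit_through (basis_indep coB_basis) nd) => C HC /andP[sC xC].
exists C => //; split => // z zC.
by move: (Hmin C); rewrite /cocircuit HC setUC sC xC /= => /forall_inP; apply.
Qed.

Lemma IA_sub : IA bases B \subset B.
Proof. by apply/subsetP => x; rewrite inE => /andP[]. Qed.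

Lemma A_sub : A \subset B. Proof. exact: subsetDl. Qed.

Lemma D_sub : D \subset ~: B.
Proof. by apply/subsetP => x; rewrite inE => /andP[]. Qed.

(* Elements strictly above e never span e: for P inside B this uses that B is
   nbc; dually, for Q inside E - B and e in A or outside B, it uses that e is
   not internally active. *)
Lemma notin_cl_above (e : E) P : P \subset B -> (forall x, x \in P -> e < x) ->
  e \notin cl bases P.
Proof.
move=> sPB Hgt; apply: (notin_cl_basis HM Hrank B_basis sPB).
  by apply/negP => /Hgt; rewrite ltnn.
move=> eB; case: (nbc_fundamental_circuit eB) => C HC [sC _ [y yC lt]].
exists C => //; rewrite sC /=; apply/subsetPn; exists y => //.
by apply/setU1P => -[Ey|/Hgt]; [rewrite Ey ltnn in lt | rewrite ltnNge ltnW].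
Qed.

Lemma notin_clp_above (e : E) Q : (e \in A) || (e \notin B) -> Q \subset ~: B ->
  (forall x, x \in Q -> e < x) -> e \notin clp bases Q.
Proof.
move=> He sQ Hgt; apply: (notin_cl_basis dual_is_matroid dual_card coB_basis sQ).
  by apply/negP => /Hgt; rewrite ltnn.
rewrite inE negbK => eB; have eA : e \in A by rewrite eB orbF in He.
case: (inactive_fundamental_cocircuit eA) => C HC [sC _ [y yC lt]].
exists C => //; rewrite sC /=; apply/subsetPn; exists y => //.
by apply/setU1P => -[Ey|/Hgt]; [rewrite Ey ltnn in lt | rewrite ltnNge ltnW].
Qed.

Lemma gt_part_A_indep (e : E) : indep bases (gt_part A e).
Proof.
exact: indep_sub (subset_trans (gt_part_sub _ _) A_sub) (basis_indep B_basis).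
Qed.

Lemma gt_part_coB_indep (e : E) : indep (dual bases) (gt_part (~: B) e).
Proof.
exact: indep_sub (gt_part_sub _ _) (basis_indep coB_basis).
Qed.

Definition upper_closure (e : E) : {set E} :=
  cl bases (gt_part A e) :|: clp bases (gt_part (~: B) e).

Lemma notin_upper_closure (e : E) : (e \in A) || (e \notin B) ->
  e \notin upper_closure e.
Proof.
move=> He; rewrite in_setU negb_or; apply/andP; split.
  apply: notin_cl_above => [|x]; last by rewrite inE => /andP[].
  exact: subset_trans (gt_part_sub _ _) A_sub.
by apply: notin_clp_above (gt_part_sub _ _) _ => // x; rewrite inE => /andP[].
Qed.

(* Everything above e is spanned by the elements of A above e or cospanned
   by the elements of E - B above e; internally active elements are handled
   by their fundamental cocircuit, all of whose other elements lie above. *)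
Lemma above_in_upper_closure (e y : E) : e < y -> y \in upper_closure e.
Proof.
move=> lt; rewrite in_setU; case: (boolP (y \in B)) => yB; last first.
  by rewrite (subsetP (cl_sub (gt_part_coB_indep e))) ?orbT // !inE yB.
case: (boolP (y \in IA bases B)) => yIA; last first.
  by rewrite (subsetP (cl_sub (gt_part_A_indep e))) // inE in_setD yIA yB.
case: (active_fundamental_cocircuit yIA) => C HC [sC yC Hmin].
apply/orP; right; apply: (cl_circuit (gt_part_coB_indep e) HC).
apply/subsetP => z; rewrite in_setD1 => /andP[zy zC]; rewrite inE.
move: (subsetP sC z zC); case/setU1P => [Ez|->]; first by rewrite Ez eqxx in zy.
exact: leq_trans lt (Hmin z zC).
Qed.

Lemma upper_closure_max (e : E) : e \in A :|: D -> is_max (~: upper_closure e) e.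
Proof.
move=> eAD; split.
  rewrite inE; apply: notin_upper_closure; move: eAD; rewrite in_setU.
  by case/orP => [->//|/(subsetP D_sub)]; rewrite inE => ->; rewrite orbT.
move=> y; rewrite inE leqNgt; apply: contra; exact: above_in_upper_closure.
Qed.

Lemma card_A : #|A| = r - k.
Proof. by rewrite cardsD (setIidPr IA_sub) (Hrank B_basis) HIA subSS. Qed.

Lemma k_le_r : k <= r.
Proof. by have := subset_leq_card IA_sub; rewrite HIA (Hrank B_basis). Qed.

Lemma r_lt_n : r < n.
Proof.
case: (Hcoloop ord0) => B' HB' nB'.
have : #|B'| < #|[set: E]|.
  by apply: proper_card; rewrite properT; apply: contraNneq nB' => ->; rewrite inE.
by rewrite cardsT card_ord (Hrank HB').
Qed.

Lemma coB_min : exists2 m0 : E, m0 \in ~: B & forall y, y \in ~: B -> m0 <= y.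
Proof.
by apply: set_min; rewrite -card_gt0 (dual_card coB_basis) subn_gt0 r_lt_n.
Qed.

Lemma coB_below (e : E) : e \in A :|: D -> exists2 y, y \in ~: B & y < e.
Proof.
rewrite in_setU => /orP[eA|]; last by rewrite inE => /andP[_ /exists_inP].
case: (inactive_fundamental_cocircuit eA) => C HC [sC eC [y yC lt]].
exists y => //; move: (subsetP sC y yC); case/setU1P => // Ey.
by rewrite Ey ltnn in lt.
Qed.

Lemma D_minus_min (m0 : E) : m0 \in ~: B -> (forall y, y \in ~: B -> m0 <= y) ->
  D = ~: B :\ m0.
Proof.
move=> m0B Hmin; apply/setP => x; rewrite !inE andbC.
case: (boolP (x \in B)) => xB; rewrite ?andbF ?andbT //; apply/exists_inP/idP.
  case=> y yB lt; apply: contraTneq lt => ->; rewrite -leqNgt; exact: Hmin.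
move=> xm0; exists m0 => //; rewrite ltn_neqAle Hmin ?inE //.
by rewrite andbT; apply: contra xm0 => /eqP/val_inj ->.
Qed.

Lemma card_D : #|D| = n - r - 1.
Proof.
case: coB_min => m0 m0B Hmin; rewrite (D_minus_min m0B Hmin).
by rewrite -(dual_card coB_basis) (cardsD1 m0 (~: B)) m0B add1n subn1.
Qed.

Lemma gt_part_coB (e y : E) : y \in ~: B -> y <= e -> gt_part (~: B) e = gt_part D e.
Proof.
move=> yB ye; apply/setP => x; rewrite !inE.
case: (boolP (e < x)) => ex; rewrite ?andbF ?andbT //.
apply/idP/idP => [xB|/andP[]//]; rewrite xB /=.
by apply/exists_inP; exists y => //; apply: leq_ltn_trans ex.
Qed.

Local Notation sA := (sort (fun x y : E => y < x) (enum A)).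
Local Notation sD := (sort (fun x y : E => x < y) (enum D)).
Local Notation sq := (nbc_seq bases B).
Local Notation ej := (nth ord0 sq).

Lemma size_sA : size sA = #|A|. Proof. by rewrite size_sort cardE. Qed.
Lemma size_sD : size sD = #|D|. Proof. by rewrite size_sort cardE. Qed.
Lemma mem_sA x : (x \in sA) = (x \in A). Proof. by rewrite mem_sort mem_enum. Qed.
Lemma mem_sD x : (x \in sD) = (x \in D). Proof. by rewrite mem_sort mem_enum. Qed.

Lemma uniq_sq : uniq sq.
Proof.
rewrite cat_uniq !sort_uniq !enum_uniq /= andbT; apply/hasPn => x.
rewrite mem_sD mem_sA => /(subsetP D_sub); rewrite inE; apply: contra.
exact: (subsetP A_sub).
Qed.

Lemma size_sq_A_D : size sq = #|A| + #|D|.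
Proof. by rewrite size_cat size_sA size_sD. Qed.

Lemma size_sq : size sq = n - k - 1.
Proof. by rewrite size_sq_A_D card_A card_D; have := r_lt_n; have := k_le_r; lia. Qed.

Lemma A_le_sq : #|A| <= size sq. Proof. by rewrite size_sq_A_D leq_addr. Qed.

Lemma sA_sorted : sorted (fun x y : E => y < x) sA.
Proof.
apply: (sort_distinct_sorted (l2 := fun x y : E => y <= x)); last exact: enum_uniq.
  by move=> x y xy /=; rewrite ltn_neqAle eq_sym val_eqE xy.
by move=> x y; exact: leq_total.
Qed.

Lemma sD_sorted : sorted (fun x y : E => x < y) sD.
Proof.
apply: (sort_distinct_sorted (l2 := fun x y : E => x <= y)); last exact: enum_uniq.
  by move=> x y xy /=; rewrite ltn_neqAle val_eqE xy.
by move=> x y; exact: leq_total.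
Qed.

Lemma nth_A i : i < #|A| -> ej i = nth ord0 sA i.
Proof. by move=> hi; rewrite nth_cat size_sA hi. Qed.

Lemma nth_D i : #|A| <= i -> ej i = nth ord0 sD (i - #|A|).
Proof. by move=> hi; rewrite nth_cat size_sA ltnNge hi. Qed.

Lemma nth_A_mem i : i < #|A| -> ej i \in A.
Proof. by move=> hi; rewrite nth_A // -mem_sA mem_nth // size_sA. Qed.

Lemma nth_D_mem i : #|A| <= i -> i < size sq -> ej i \in D.
Proof.
by move=> hi; rewrite size_sq_A_D => him; rewrite nth_D // -mem_sD mem_nth // size_sD; lia.
Qed.

Lemma nth_mem i : i < size sq -> ej i \in A :|: D.
Proof.
move=> im; rewrite in_setU; case: (ltnP i #|A|) => hi; first by rewrite nth_A_mem.
by rewrite nth_D_mem ?orbT.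
Qed.

Lemma nth_A_decr i j : i < j -> j < #|A| -> ej j < ej i.
Proof.
move=> ij hj; rewrite !nth_A //; last by lia.
have trA : transitive (fun x y : E => y < x) by move=> a b c /= h1 h2; exact: ltn_trans h2 h1.
by apply: (sorted_ltn_nth trA ord0 sA_sorted) => //; rewrite inE size_sA //; lia.
Qed.

Lemma nth_D_incr i j : #|A| <= i -> i < j -> j < size sq -> ej i < ej j.
Proof.
move=> hi ij jm; rewrite !nth_D //; last by lia.
have trD : transitive (fun x y : E => x < y) by move=> a b c /= h1 h2; exact: ltn_trans h1 h2.
by apply: (sorted_ltn_nth trD ord0 sD_sorted); rewrite ?inE ?size_sD; move: jm; rewrite size_sq_A_D; lia.
Qed.

Lemma index_A x : x \in A -> exists2 j, j < #|A| & ej j = x.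
Proof.
move=> xA; have xs : x \in sA by rewrite mem_sA.
have hi : index x sA < #|A| by rewrite -size_sA index_mem.
by exists (index x sA) => //; rewrite nth_A // nth_index.
Qed.

Lemma index_D x : x \in D -> exists j, [/\ #|A| <= j, j < size sq & ej j = x].
Proof.
move=> xD; have xs : x \in sD by rewrite mem_sD.
exists (#|A| + index x sD); split; first exact: leq_addr.
  by rewrite size_sq_A_D ltn_add2l -size_sD index_mem.
by rewrite nth_D ?leq_addr // addKn nth_index.
Qed.

Local Notation PF j := [set x in take j.+1 sq].
Local Notation QG j := [set x in drop j sq].

Lemma PF_upper j x : j < #|A| -> (x \in PF j) = (x \in A) && (ej j <= x).
Proof.
move=> hj; rewrite inE; apply/idP/andP.
  case/(mem_take_nth ord0) => i [ij isz <-]; split; first by apply: nth_A_mem; lia.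
  by case: (ltngtP i j) => [lt|gt|->//]; [apply: ltnW; apply: nth_A_decr | lia].
case=> xA le; case: (index_A xA) => i hi Ei; rewrite -Ei in le *.
apply: nth_in_take; last exact: leq_trans hi A_le_sq.
by rewrite ltnS leqNgt; apply: contraTN le => /nth_A_decr /(_ hi); rewrite -ltnNge.
Qed.

Lemma QG_upper j x : #|A| <= j -> j < size sq -> (x \in QG j) = (x \in D) && (ej j <= x).
Proof.
move=> hj jm; rewrite inE; apply/idP/andP.
  case/(mem_drop_nth ord0) => i [ji isz <-]; split; first by apply: nth_D_mem => //; lia.
  by case: (ltngtP j i) => [lt|gt|->//]; [apply: ltnW; apply: nth_D_incr | lia].
case=> xD le; case: (index_D xD) => i [hi im Ei]; rewrite -Ei in le *.
apply: nth_in_drop => //; rewrite leqNgt; apply: contraTN le => lt.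
by rewrite -ltnNge; apply: nth_D_incr.
Qed.

Lemma PF_card j : j < size sq -> #|PF j| = j.+1.
Proof.
move=> jm; rewrite cardsE; move/card_uniqP: (take_uniq j.+1 uniq_sq) => ->.
by rewrite size_takel.
Qed.

Lemma QG_card j : #|QG j| = size sq - j.
Proof.
rewrite cardsE; move/card_uniqP: (drop_uniq j uniq_sq) => ->.
by rewrite size_drop.
Qed.

Lemma PF_mono i j : i <= j -> PF i \subset PF j.
Proof.
move=> ij; apply/subsetP => x; rewrite !inE -(take_takel sq (_ : i.+1 <= j.+1)) //.
exact: mem_take.
Qed.

Lemma QG_mono i j : i <= j -> QG j \subset QG i.
Proof.
by move=> ij; apply/subsetP => x; rewrite !inE -(subnK ij) -drop_drop; exact: mem_drop.
Qed.

Lemma PF_indep j : j < #|A| -> indep bases (PF j).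
Proof.
move=> hj; apply: indep_sub (basis_indep B_basis); apply/subsetP => x.
by rewrite PF_upper // => /andP[/(subsetP A_sub)].
Qed.

Lemma QG_indep j : #|A| <= j -> indep (dual bases) (QG j).
Proof.
move=> hj; apply: indep_sub (basis_indep coB_basis); apply/subsetP => x.
rewrite inE => /(mem_drop_nth ord0) [i [ji isz <-]].
by apply: (subsetP D_sub); apply: nth_D_mem => //; lia.
Qed.

Local Notation F := (nbc_F bases B).
Local Notation G := (nbc_G bases B).

Lemma FG_cap j : F j :&: G j = if j < #|A| then cl bases (PF j) else clp bases (QG j).
Proof. by rewrite /nbc_F /nbc_G; case: ifP; rewrite ?setIT ?setTI. Qed.

Lemma gt_part_A_segment (e : E) : gt_part A e = set0 \/
  exists2 j, j < #|A| & e < ej j /\ gt_part A e = PF j.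
Proof.
case: (eqVneq (gt_part A e) set0) => [->|ne]; [by left | right].
case: (set_min ne) => m; rewrite inE => /andP[mA em] Hm.
case: (index_A mA) => j hj Ej; exists j => //; rewrite Ej; split => //.
apply/setP => x; rewrite PF_upper // Ej inE; apply/andP/andP => -[xA lt]; split => //.
  by apply: Hm; rewrite inE xA lt.
exact: leq_trans em lt.
Qed.

Lemma gt_part_D_segment (e : E) : gt_part D e = set0 \/
  exists j, [/\ #|A| <= j, j < size sq, e < ej j & gt_part D e = QG j].
Proof.
case: (eqVneq (gt_part D e) set0) => [->|ne]; [by left | right].
case: (set_min ne) => m; rewrite inE => /andP[mD em] Hm.
case: (index_D mD) => j [hj jm Ej]; exists j; rewrite Ej; split => //.
apply/setP => x; rewrite QG_upper // Ej inE; apply/andP/andP => -[xD lt]; split => //.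
  by apply: Hm; rewrite inE xD lt.
exact: leq_trans em lt.
Qed.

Lemma bigcup_FG_upper (e y : E) : y \in ~: B -> y <= e ->
  \bigcup_(j < size sq | e < ej j) (F j :&: G j) = upper_closure e.
Proof.
move=> yB ye; rewrite /upper_closure (gt_part_coB yB ye).
apply/eqP; rewrite eqEsubset; apply/andP; split.
  apply/bigcupsP => -[j /= jm] ltj; rewrite FG_cap; case: ltnP => hj.
    apply: subset_trans (subsetUl _ _); apply: (cl_mono _ (gt_part_A_indep e)).
    apply/subsetP => x; rewrite PF_upper // => /andP[xA le].
    by rewrite inE xA (leq_trans ltj le).
  apply: subset_trans (subsetUr _ _).
  rewrite -(gt_part_coB yB ye); apply: (cl_mono _ (gt_part_coB_indep e)).
  rewrite (gt_part_coB yB ye); apply/subsetP => x.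
  rewrite QG_upper // => /andP[xD le].
  by rewrite inE xD (leq_trans ltj le).
rewrite subUset; apply/andP; split.
  case: (gt_part_A_segment e) => [->|[j hj [lt ->]]].
    by rewrite cl_set0 // sub0set.
  have jm : j < size sq := leq_trans hj A_le_sq.
  by apply: subset_trans (bigcup_sup (Ordinal jm) lt); rewrite FG_cap hj.
case: (gt_part_D_segment e) => [->|[j [hj jm lt ->]]].
  by rewrite /clp (cl_set0 dual_is_matroid (coloopless_dual Hcoloop)) sub0set.
by apply: subset_trans (bigcup_sup (Ordinal jm) lt); rewrite FG_cap ltnNge hj.
Qed.

Lemma FG_mono i j : i <= j -> F i \subset F j /\ G j \subset G i.
Proof.
move=> ij; rewrite /nbc_F /nbc_G; case: (ltnP j #|A|) => hj.
  have hi : i < #|A| by lia.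
  by rewrite hi; split; [exact: cl_mono (PF_mono ij) (PF_indep hj) | exact: subxx].
by case: (ltnP i #|A|) => hi; split; rewrite ?subsetT //; exact: cl_mono (QG_mono ij) (QG_indep hi).
Qed.

(* Distinct indices give distinct biflats, as ranks/coranks strictly grow. *)
Lemma FG_injective i j : i < j -> j < size sq -> (F i, G i) <> (F j, G j).
Proof.
move=> ij jm [EF EG]; move: EF EG; rewrite /nbc_F /nbc_G.
have rkF l : l < #|A| -> rank bases (cl bases (PF l)) = l.+1.
  by move=> hl; rewrite (rank_cl HM Hrank (PF_indep hl)) PF_card //; exact: leq_trans hl A_le_sq.
case: (ltnP j #|A|) => hj.
  have hi : i < #|A| by lia.
  by rewrite hi => EF _; have := rkF i hi; rewrite EF rkF //; lia.
case: (ltnP i #|A|) => hi.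
  move=> EF _; have Hc : #|PF i| < r.+1.
    by rewrite PF_card; [move: hi; rewrite card_A; lia | exact: leq_trans hi A_le_sq].
  by move: (cl_neqT HM Hrank (PF_indep hi) Hc); rewrite EF eqxx.
move=> _; rewrite /clp => EG; have := rank_cl dual_is_matroid dual_card (QG_indep hi).
rewrite EG (rank_cl dual_is_matroid dual_card (QG_indep (leq_trans hi (ltnW ij)))) !QG_card.
lia.
Qed.

Lemma FG_biflat j : j < size sq -> biflat bases (F j) (G j).
Proof.
move=> jm; rewrite /nbc_F /nbc_G; case: (ltnP j #|A|) => hj; split.
- by rewrite /flat (cl_idem HM Hrank (PF_indep hj)).
- by rewrite /flat cl_setT.
- apply/andP; split; apply/set0Pn; last by exists ord0; rewrite inE.
  exists (ej j); apply: (subsetP (cl_sub (PF_indep hj))).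
  by rewrite inE; apply: nth_in_take.
- rewrite eqxx andbT; apply: (cl_neqT HM Hrank (PF_indep hj)).
  by rewrite PF_card //; move: hj; rewrite card_A; lia.
- exact: setUT.
- by rewrite /flat cl_setT.
- by rewrite /flat (cl_idem dual_is_matroid dual_card (QG_indep hj)).
- apply/andP; split; apply/set0Pn; first by exists ord0; rewrite inE.
  exists (ej j); apply: (subsetP (cl_sub (QG_indep hj))).
  by rewrite inE; apply: nth_in_drop.
- rewrite eqxx /=; apply: (cl_neqT dual_is_matroid dual_card (QG_indep hj)).
  rewrite QG_card size_sq_A_D card_D; have := r_lt_n; lia.
- exact: setTU.
Qed.

Lemma nth_in_FG i : i < size sq -> ej i \in F i :&: G i.
Proof.
move=> im; rewrite FG_cap; case: ltnP => hi.
  by apply: (subsetP (cl_sub (PF_indep hi))); rewrite inE; apply: nth_in_take.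
by apply: (subsetP (cl_sub (QG_indep hi))); rewrite inE; apply: nth_in_drop.
Qed.

(* The least element of E - B lies in no biflat intersection. *)
Lemma FG_not_cover : \bigcup_(j < size sq) (F j :&: G j) != setT.
Proof.
case: coB_min => m0 m0B Hmin.
have above j : j < size sq -> m0 < ej j.
  move=> jm; case: (coB_below (nth_mem jm)) => y yB lt.
  exact: leq_ltn_trans (Hmin y yB) lt.
rewrite (eq_bigl (fun j : 'I_(size sq) => m0 < ej j)); last by move=> j; rewrite above.
rewrite (bigcup_FG_upper m0B (leqnn _)); apply/negP => /eqP UT.
have m0nB : (m0 \in A) || (m0 \notin B) by rewrite -in_setC m0B orbT.
by move: (notin_upper_closure m0nB); rewrite UT inE.
Qed.

(* The maximality condition of T^m, via the upper closure of e_i. *)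
Lemma nth_max i : i < size sq ->
  is_max (~: \bigcup_(j < size sq | ej i < ej j) (F j :&: G j)) (ej i).
Proof.
move=> im; case: (coB_below (nth_mem im)) => y yB lt.
by rewrite (bigcup_FG_upper yB (ltnW lt)); apply: upper_closure_max; exact: nth_mem.
Qed.

Lemma nbc_biflag_in_T : in_T bases (n - k - 1) F G (nbc_e bases B).
Proof.
rewrite -size_sq; split.
- split.
  + exact: FG_biflat.
  + move=> i j im jm; rewrite /compatible; case: (leqP i j) => ij.
      by case: (FG_mono ij) => -> ->.
    by case: (FG_mono (ltnW ij)) => -> ->; rewrite orbT.
  + move=> i j im jm Eij; case: (ltngtP i j) => // ij.
      by case: (FG_injective ij jm).
    by case: (FG_injective ij im).
  + exact: FG_not_cover.
- by move=> i j /andP[ij _]; apply: FG_mono.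
- by move=> i j im jm /eqP; rewrite /nbc_e nth_uniq ?uniq_sq // => /eqP.
- exact: nth_in_FG.
- exact: nth_max.
Qed.

End NbcBiflag.

Theorem mainTheorem8 (n r k : nat) (bases : {set {set 'I_n.+1}})
  (HM : is_matroid bases) (Hloop : loopless bases) (Hcoloop : coloopless bases)
  (Hrank : forall B, B \in bases -> #|B| = r.+1)
  (B : {set 'I_n.+1}) (HB : nbc bases B) (HIA : #|IA bases B| = k.+1) :
  in_T bases (n - k - 1) (nbc_F bases B) (nbc_G bases B) (nbc_e bases B)
  /\
  (forall e : 'I_n.+1, e \in (B :\: IA bases B) :|: coB_nomin B ->
     is_max (~: (cl bases (gt_part (B :\: IA bases B) e)
                 :|: clp bases (gt_part (~: B) e))) e).
Proof.
split; first exact: (nbc_biflag_in_T HM Hloop Hcoloop Hrank HB HIA).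
by move=> e; apply: (upper_closure_max HM Hrank HB).
Qed.
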